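(* Let $G=(V,E)$ be a diamond-free graph and $xy\in E$. For $i\ge 1$ let $N_i=\{z\in V:\ \min(\mathrm{dist}_G(z,x),\mathrm{dist}_G(z,y))=i\}$, and suppose $N_2=\{u_1,\dots,u_k\}$ is an independent set. For $j\in\{1,\dots,k\}$ let $T_j=\{t\in N_3:\ N(t)\cap N_2=\{u_j\}\}$. Let $Y=V\setminus(\{x,y\}\cup N_1\cup N_2\cup N_3)$. Let $z\in N_4$ have no neighbor in $Y$, and suppose $z$ is adjacent to some $t_i\in T_i$. Then every dominating induced matching $M$ of $G$ with $xy\in M$ contains the edge $u_it_i$. Moreover, if $|N(z)\cap T_i|\ge 2$, then $G$ has no dominating induced matching $M$ with $xy\in M$.
   Context: All graphs are finite, simple and undirected; $\mathrm{dist}_G$ is the shortest-path distance and $N(v)$ the set of neighbors of $v$. A set $M$ of edges is a dominating induced matching if every edge of $G$ shares at least one vertex with exactly one edge of $M$. A diamond is $K_4$ minus one edge. *)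

From mathcomp Require Import all_boot.
Set Implicit Arguments. Unset Strict Implicit. Unset Printing Implicit Defensive.

(* A finite simple graph: vertex type V : finType, adjacency e : rel V,
   assumed symmetric and irreflexive in the theorem. *)

Section Graph.
Variables (V : finType) (e : rel V).

Definition walk_len (a b : V) (n : nat) : Prop :=
  exists s : seq V, [/\ path e a s, size s = n & last a s = b].

Definition dist_le (a b : V) (n : nat) : Prop :=
  exists m, m <= n /\ walk_len a b m.

Definition layer (x y : V) (i : nat) (z : V) : Prop :=
  (dist_le z x i \/ dist_le z y i) /\
  ~ (exists j, j < i /\ (dist_le z x j \/ dist_le z y j)).

(* diamond = K4 minus an edge; diamond-free = no induced diamond *)
Definition diamond_free : Prop :=
  forall a b c d : V, a != b -> ~~ e a b -> e c d ->
    e a c -> e a d -> e b c -> e b d -> False.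

(* edges are represented as 2-element vertex sets *)
Definition is_edge (f : {set V}) : Prop := exists u v, e u v /\ f = [set u; v].

(* M is a dominating induced matching: M is a set of edges, and every edge
   of G shares at least one vertex with exactly one edge of M. *)
Definition dim (M : {set {set V}}) : Prop :=
  (forall f, f \in M -> is_edge f) /\
  (forall u v, e u v -> #|[set m in M | m :&: [set u; v] != set0]| = 1).

End Graph.

From mathcomp Require Import all_boot.

Set Implicit Arguments. Unset Strict Implicit. Unset Printing Implicit Defensive.

(* Every vertex of N_1
   is adjacent to x or y, so it is already dominated by xy and stays
   unmatched; hence every vertex of N_2 is matched, and a matched vertex w of
   N_3 must be matched to its neighbour in N_2 (otherwise the edge from w to
   N_2 would meet two edges of M).  If u_i were matched to a vertex other than
   t_i, then t_i would be unmatched, so the edge z t_i forces z to be matched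
   to a neighbour w, which lies in N_3 since z has no neighbour in Y; but then
   z, in N_4, would be the N_2 partner of w.  Two such vertices t_i give two
   edges of M through u_i, which is impossible. *)

Section Distances.
Variables (V : finType) (e : rel V).

Lemma dist_le_refl a : dist_le e a a 0.
Proof. by exists 0; split=> //; exists [::]. Qed.

Lemma dist_le0 a b : dist_le e a b 0 -> a = b.
Proof. by case=> m [lem0 [[|v s] [_ /= sm <-]]]; rewrite -sm in lem0. Qed.

Lemma dist_le_cons a b c n : e a b -> dist_le e b c n -> dist_le e a c n.+1.
Proof.
move=> eab [m [lemn [s [ps ss ls]]]].
by exists m.+1; split=> //; exists (b :: s); rewrite /= eab ss.
Qed.

Lemma dist_le_pred a c n :
  dist_le e a c n.+1 -> ~ dist_le e a c n -> exists2 v, e a v & dist_le e v c n.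
Proof.
move=> [m [lemn [s [ps ss ls]]]] not_n.
case: (leqP m n) => [lemn' | ltnm]; first by case: not_n; exists m; split=> //; exists s.
have Em : m = n.+1 by apply/eqP; rewrite eqn_leq lemn ltnm.
rewrite Em in ss.
case: s ps ss ls => [|v s] //= /andP [eav ps] [ss] ls.
by exists v => //; exists n; split=> //; exists s.
Qed.

End Distances.

Section Layers.
Variables (V : finType) (e : rel V) (x y : V).

Definition edge_dist_le (a : V) (j : nat) : Prop :=
  dist_le e a x j \/ dist_le e a y j.

Lemma edge_dist_le_cons a b n :
  e a b -> edge_dist_le b n -> edge_dist_le a n.+1.
Proof. by move=> eab [h|h]; [left|right]; apply: dist_le_cons eab h. Qed.

Lemma edge_dist_le0 a : edge_dist_le a 0 -> a = x \/ a = y.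
Proof. by case=> /dist_le0; auto. Qed.

Lemma layer_min n a j : layer e x y n a -> j < n -> ~ edge_dist_le a j.
Proof. by move=> [_ not_lt] ltjn near_j; apply: not_lt; exists j. Qed.

Lemma layer_uniq m n a : layer e x y m a -> layer e x y n a -> m = n.
Proof.
move=> Lm Ln; case: (ltngtP m n) => // [ltmn | ltnm].
- by case: (layer_min Ln ltmn); case: Lm.
- by case: (layer_min Lm ltnm); case: Ln.
Qed.

Lemma layer_adj n a b j :
  layer e x y n a -> e a b -> edge_dist_le b j -> n <= j.+1.
Proof.
move=> La eab near_b; rewrite leqNgt; apply/negP => ltjn.
exact: (layer_min La ltjn) (edge_dist_le_cons eab near_b).
Qed.

Lemma layer_pred n w : layer e x y n.+1 w -> exists2 v, e w v & layer e x y n v.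
Proof.
move=> Lw; have not_n := layer_min Lw (ltnSn n).
have [v ewv near_v] : exists2 v, e w v & edge_dist_le v n.
  case: Lw.1 => [near_x | near_y].
  - have [|v ewv vx] := dist_le_pred near_x; first by move=> h; apply: not_n; left.
    by exists v => //; left.
  - have [|v ewv vy] := dist_le_pred near_y; first by move=> h; apply: not_n; right.
    by exists v => //; right.
exists v => //; split=> // -[j [ltjn near_j]].
exact: (layer_min Lw (ltjn : j.+1 < n.+1)) (edge_dist_le_cons ewv near_j).
Qed.

Lemma layer1_neq a : layer e x y 1 a -> a != x /\ a != y.
Proof.
move=> La; have not0 := layer_min La (ltn0Sn 0).
by split; apply/eqP => E; apply: not0; rewrite E; [left|right]; apply: dist_le_refl.
Qed.

End Layers.

Section DominatingInducedMatching.
Variables (V : finType) (e : rel V) (M : {set {set V}}).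
Hypotheses (e_sym : symmetric e) (M_dim : dim e M).

Lemma meetP (m : {set V}) a b :
  reflect (a \in m \/ b \in m) (m :&: [set a; b] != set0).
Proof.
apply: (iffP (set0Pn _)) => [[c] | [am | bm]].
- by rewrite inE => /andP [cm /set2P [] <-]; [left | right].
- by exists a; rewrite !inE am eqxx.
- by exists b; rewrite !inE bm eqxx orbT.
Qed.

Lemma dim_cover a b : e a b -> exists2 m, m \in M & (a \in m \/ b \in m).
Proof.
move=> eab; have [k Ek] := cards1P (introT eqP (M_dim.2 a b eab)).
have : k \in [set m in M | m :&: [set a; b] != set0] by rewrite Ek set11.
by rewrite inE => /andP [kM /meetP]; exists k.
Qed.

Lemma dim_cover_uniq a b f g : e a b -> f \in M -> g \in M ->
  (a \in f \/ b \in f) -> (a \in g \/ b \in g) -> f = g.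
Proof.
move=> eab fM gM /meetP fab /meetP gab.
have [k Ek] := cards1P (introT eqP (M_dim.2 a b eab)).
have : f \in [set m in M | m :&: [set a; b] != set0] by rewrite inE fM.
have : g \in [set m in M | m :&: [set a; b] != set0] by rewrite inE gM.
by rewrite Ek !in_set1 => /eqP -> /eqP ->.
Qed.

Lemma dim_edge_partner f a : f \in M -> a \in f -> exists2 b, e a b & f = [set a; b].
Proof.
move=> fM; have [p [q [epq ->]]] := M_dim.1 f fM.
case/set2P => ->; first by exists q.
by exists p; [rewrite e_sym | rewrite setUC].
Qed.

Lemma dim_edges_share f g a : f \in M -> g \in M -> a \in f -> a \in g -> f = g.
Proof.
move=> fM gM af ag; have [b eab _] := dim_edge_partner fM af.
exact: dim_cover_uniq eab fM gM (or_introl af) (or_introl ag).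
Qed.

Lemma dim_unmatched_neighbor a b m g :
  e a b -> m \in M -> a \in m -> b \notin m -> g \in M -> b \notin g.
Proof.
move=> eab mM am bNm gM; apply: contra bNm => bg.
by rewrite (dim_cover_uniq eab mM gM (or_introl am) (or_intror bg)).
Qed.

End DominatingInducedMatching.

Section MatchingAroundEdge.
Variables (V : finType) (e : rel V) (x y : V) (M : {set {set V}}).
Hypotheses (e_sym : symmetric e) (e_irr : irreflexive e).
Hypotheses (M_dim : dim e M) (xyM : [set x; y] \in M).

Lemma layer1_unmatched a m : layer e x y 1 a -> m \in M -> a \notin m.
Proof.
move=> La mM; have [c eac Lc] := layer_pred La.
have [ax ay] := layer1_neq La.
have cxy : c \in [set x; y] by case: (edge_dist_le0 Lc.1) => ->; rewrite !inE eqxx ?orbT.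
have aNxy : a \notin [set x; y] by rewrite !inE negb_or ax ay.
have eca : e c a by rewrite e_sym.
exact: (dim_unmatched_neighbor M_dim eca xyM cxy aNxy mM).
Qed.

Lemma layer2_matched v : layer e x y 2 v -> exists2 m, m \in M & v \in m.
Proof.
move=> Lv; have [a eva La] := layer_pred Lv.
have [m mM [vm | am]] := dim_cover M_dim eva; first by exists m.
by case/negP: (layer1_unmatched La mM).
Qed.

Lemma layer3_partner w z : layer e x y 3 w -> [set w; z] \in M -> layer e x y 2 z.
Proof.
move=> Lw wzM; have [v ewv Lv] := layer_pred Lw.
have [k kM vk] := layer2_matched Lv.
have Ek := dim_cover_uniq M_dim ewv wzM kM (or_introl (set21 w z)) (or_intror vk).
move: vk; rewrite -Ek => /set2P [Evw | <-] //.
by move: ewv; rewrite Evw e_irr.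
Qed.

Lemma dim_contains_T_edge z u t :
  layer e x y 4 z ->
  (forall w, e z w -> w = x \/ w = y \/ layer e x y 1 w \/ layer e x y 2 w
                      \/ layer e x y 3 w) ->
  layer e x y 2 u -> e u t -> e z t -> [set u; t] \in M.
Proof.
move=> Lz z_nbrs Lu eut ezt.
have [m mM um] := layer2_matched Lu.
have [b eub Em] := dim_edge_partner e_sym M_dim mM um.
have [Ebt | neq_bt] := eqVneq b t; first by rewrite -Ebt -Em.
have tNm : t \notin m.
  rewrite Em !inE negb_or [t == b]eq_sym neq_bt andbT.
  by apply: contraTneq eut => ->; rewrite e_irr.
have t_unmatched := dim_unmatched_neighbor M_dim eut mM um tNm.
have [h hM [zh | th]] := dim_cover M_dim ezt; last by case/negP: (t_unmatched h hM).
have [w ezw Eh] := dim_edge_partner e_sym M_dim hM zh.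
have Lw : layer e x y 3 w.
  have near_le j : edge_dist_le e x y w j -> 3 <= j.
    by move=> near_w; have := layer_adj Lz ezw near_w.
  case: (z_nbrs w ezw) => [Ew | [Ew | [L | [L | //]]]].
  - by have := near_le 0; rewrite Ew => /(_ (or_introl (dist_le_refl e x))).
  - by have := near_le 0; rewrite Ew => /(_ (or_intror (dist_le_refl e y))).
  - by have := near_le 1 L.1.
  - by have := near_le 2 L.1.
have Lz2 : layer e x y 2 z by apply: layer3_partner Lw _; rewrite setUC -Eh.
by have := layer_uniq Lz Lz2.
Qed.

End MatchingAroundEdge.

Theorem proposition1 (V : finType) (e : rel V) (x y : V) :
  symmetric e -> irreflexive e -> diamond_free e -> e x y ->
  (* N_2 is an independent set *)
  (forall u v, layer e x y 2 u -> layer e x y 2 v -> ~~ e u v) ->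
  forall (z u t : V),
    layer e x y 4 z ->
    (* z has no neighbour in Y = V \ ({x,y} u N1 u N2 u N3) *)
    (forall w, e z w -> w = x \/ w = y \/ layer e x y 1 w \/ layer e x y 2 w
                       \/ layer e x y 3 w) ->
    layer e x y 2 u ->
    (* t belongs to T_u *)
    layer e x y 3 t ->
    (forall w, layer e x y 2 w -> (e t w <-> w = u)) ->
    e z t ->
    (forall M : {set {set V}}, dim e M -> [set x; y] \in M -> [set u; t] \in M) /\
    ((exists t1 t2, t1 != t2 /\
        (forall t', t' \in [:: t1; t2] ->
           [/\ e z t', layer e x y 3 t' &
               forall w, layer e x y 2 w -> (e t' w <-> w = u)])) ->
     ~ exists M : {set {set V}}, dim e M /\ [set x; y] \in M).
Proof.
move=> e_sym e_irr _ _ _ z u t Lz z_nbrs Lu _ Tt ezt.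
have T_adj t' : (forall w, layer e x y 2 w -> (e t' w <-> w = u)) -> e u t'.
  by move=> Tt'; rewrite e_sym; apply/(Tt' u Lu).
split=> [M M_dim xyM | [t1 [t2 [neq_t12 T12]]] [M [M_dim xyM]]].
  exact: (dim_contains_T_edge e_sym e_irr M_dim xyM Lz z_nbrs Lu (T_adj t Tt) ezt).
have [ezt1 _ /T_adj eut1] := T12 t1 (mem_head _ _).
have [ezt2 _ /T_adj eut2] := T12 t2 (mem_last t1 [:: t2]).
have ut1M := dim_contains_T_edge e_sym e_irr M_dim xyM Lz z_nbrs Lu eut1 ezt1.
have ut2M := dim_contains_T_edge e_sym e_irr M_dim xyM Lz z_nbrs Lu eut2 ezt2.
have E := dim_edges_share e_sym M_dim ut1M ut2M (set21 u t1) (set21 u t2).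
have : t1 \in [set u; t2] by rewrite -E set22.
case/set2P => [Eu | Et]; last by rewrite Et eqxx in neq_t12.
by move: eut1; rewrite Eu e_irr.
Qed.
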